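(* MinPop Matching $g(\cdot),G(\cdot)$ can be computed recursively: $g(\varepsilon)=r$, $G(\varepsilon)=[\,]$; $g(\sharp)=r_\sharp$, $G(\sharp)=[\,]$. Otherwise write the string as $wc$ with last character $c$ and prefix $w$ (possibly $\varepsilon$ or $\sharp$), and let $u=g(w)$. Then $$g(wc)=h(u,c),\qquad G(wc)=G(w)+H(u,c).$$
   Context: Setting: WordPiece tokenization with vocabulary $V$ (a finite set of strings), suffix indicator string $\sharp$ (e.g. ''##'', possibly empty). A trie is built from $V$ with root $r$; $r_\sharp$ is the node representing $\sharp$. The trie may be augmented with two extra nodes representing $\sqcup$ and $\sharp\sqcup$, where $\sqcup$ is a whitespace character not in the vocabulary alphabet (these strings are not added to $V$). $\delta(u,c)$ is the child of $u$ along edge $c$, or null. $\chi_v$ is the string spelled from the root to node $v$; $\gamma_w$ is the node with $\chi_{\gamma_w}=w$, or null. The length of $w$ is $|w|$ if $w$ does not start with $\sharp$, else $|w|-|\sharp|$. $p_w$: longest (by this length) non-empty prefix $w'$ of $w$ with $w'\in V$, $w'\notin\{\varepsilon,\sharp\}$; if $w$ starts with $\sharp$, $p_w$ must also start with $\sharp$ (unless empty); $p_w=\varepsilon$ if none exists, and $p_\sharp=\varepsilon$. $q_w:=\sharp w''$ where $w=p_w w''$. MinPop Matching: $(g(w),G(w)) := (\gamma_w,[\,])$ if $\gamma_w\neq\mathrm{null}$; else $(\mathrm{null},[\,])$ if $p_w=\varepsilon$; else $(g(q_w),\,[p_w]+G(q_w))$. One-step MinPop Matching: $(h(u,c),H(u,c))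 := (\mathrm{null},[\,])$ if $u=\mathrm{null}$; otherwise $(g(\chi_u c),\,G(\chi_u c))$. *)

From mathcomp Require Import all_boot.
Set Implicit Arguments. Unset Strict Implicit. Unset Printing Implicit Defensive.

Section WordPiece.
Variables (T : eqType)
          (V : seq (seq T))
          (sharp : seq T)       (* suffix indicator, possibly empty *)
          (sp : T)
          (aug : bool).

(* Trie nodes are identified with the strings they spell (chi_v = v).
   The trie built from V (containing the node r_♯ for ♯) consists of all
   prefixes of words of V and of ♯; if aug, the nodes for ⊔ and ♯⊔ are added. *)
Definition trie_words : seq (seq T) :=
  sharp :: V ++ (if aug then [:: [:: sp]; rcons sharp sp] else [::]).

Definition isNode (w : seq T) : bool := has (prefix w) trie_words.

Definition gamma (w : seq T) : option (seq T) := if isNode w then Some w else None.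

Definition wlen (w : seq T) : nat :=
  if prefix sharp w then size w - size sharp else size w.

Definition p_cands (w : seq T) : seq (seq T) :=
  [seq w' <- [seq take i w | i <- iota 1 (size w)]
     | [&& w' \in V, w' != [::], w' != sharp
         & prefix sharp w ==> prefix sharp w'] ].

Definition p_of (w : seq T) : seq T :=
  if w == sharp then [::]
  else foldl (fun best x => if wlen best <= wlen x then x else best) [::] (p_cands w).

Definition q_of (w : seq T) : seq T := sharp ++ drop (size (p_of w)) w.

(* MinPop matching, computed with fuel; fuel (wlen w).+1 suffices since
   wlen (q_w) < wlen w whenever p_w <> ε. *)
Fixpoint gG_fuel (n : nat) (w : seq T) : option (seq T) * seq (seq T) :=
  match n with
  | 0 => (None, [::])
  | n'.+1 =>
    if isNode w then (gamma w, [::])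
    else let p := p_of w in
      if p == [::] then (None, [::])
      else let: (u, L) := gG_fuel n' (q_of w) in (u, p :: L)
  end.

Definition gG (w : seq T) : option (seq T) * seq (seq T) := gG_fuel (wlen w).+1 w.
Definition g (w : seq T) : option (seq T) := (gG w).1.
Definition G (w : seq T) : seq (seq T) := (gG w).2.

Definition hH (u : option (seq T)) (c : T) : option (seq T) * seq (seq T) :=
  match u with
  | None => (None, [::])
  | Some x => gG (rcons x c)
  end.
Definition h u c := (hH u c).1.
Definition H u c := (hH u c).2.

End WordPiece.

From Pilot Require Import Defs.
From mathcomp Require Import all_boot.
From mathcomp Require Import zify.

Set Implicit Arguments.
Unset Strict Implicit.
Unset Printing Implicit Defensive.

(* Trie nodes are closed under prefixes.  If w is a node, the recursion is the
   definition of h and H at u = w.  Otherwise wc is not a node either, and wc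
   is not an admissible prefix of itself (it would be a node), so p_(wc) = p_w
   and q_(wc) = q_w c: one step of MinPop matching on both sides reduces the
   claim for wc to the claim for q_w c, and the length of q_w is smaller than
   that of w. *)

Lemma prefix_rconsE (T : eqType) (s w : seq T) (c : T) :
  prefix s (rcons w c) = prefix s w || (s == rcons w c).
Proof.
elim: w s => [|y w IHw] [|x s] //=.
by rewrite IHw eqseq_cons andb_orr.
Qed.

Lemma mem_foldl_select (T : eqType) (f : T -> T -> T) (x0 : T) (s : seq T) :
  (forall a b, f a b = a \/ f a b = b) -> foldl f x0 s \in x0 :: s.
Proof.
move=> f_select; elim: s x0 => [|y s IHs] x0 /=; first exact: mem_head.
have := IHs (f x0 y); rewrite !inE.
by case: (f_select x0 y) => ->; case/orP=> [/eqP->|->]; rewrite ?eqxx ?orbT.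
Qed.

Section MinPop.
Variables (T : eqType) (V : seq (seq T)) (sharp : seq T) (sp : T) (aug : bool).

Local Notation isNode := (isNode V sharp sp aug).
Local Notation wlen := (wlen sharp).
Local Notation p_cands := (p_cands V sharp).
Local Notation p_of := (p_of V sharp).
Local Notation q_of := (q_of V sharp).
Local Notation gG_fuel := (gG_fuel V sharp sp aug).
Local Notation gG := (gG V sharp sp aug).
Local Notation g := (g V sharp sp aug).
Local Notation G := (G V sharp sp aug).
Local Notation h := (h V sharp sp aug).
Local Notation H := (H V sharp sp aug).

Lemma isNode_prefix u w : prefix u w -> isNode w -> isNode u.
Proof.
move=> uw /hasP[x x_word wx]; apply/hasP; exists x => //.
exact: prefix_trans uw wx.
Qed.

Lemma isNode_prefix_sharp w : prefix w sharp -> isNode w.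
Proof. by move=> w_sharp; rewrite /Defs.isNode /= w_sharp. Qed.

Lemma isNode_vocab w : w \in V -> isNode w.
Proof.
move=> wV; apply/hasP; exists w; last exact: prefix_refl.
by rewrite /trie_words inE mem_cat wV orbT.
Qed.

Lemma rcons_neq_sharp w c : ~~ isNode w -> rcons w c != sharp.
Proof.
apply: contra => /eqP w_sharp; apply: isNode_prefix_sharp.
by rewrite -w_sharp prefix_rcons.
Qed.

Lemma p_of_mem w : p_of w \in [::] :: p_cands w.
Proof.
rewrite /Defs.p_of; case: eqP => _; first exact: mem_head.
by apply: mem_foldl_select => a b; case: ifP; auto.
Qed.

Lemma prefix_p_of w : prefix (p_of w) w.
Proof.
have := p_of_mem w; rewrite inE => /orP[/eqP->|]; first exact: prefix0s.
by rewrite mem_filter => /andP[_ /mapP[i _ ->]]; apply: prefix_take.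
Qed.

Lemma p_of_admissible w : p_of w != [::] ->
  p_of w != sharp /\ (prefix sharp w -> prefix sharp (p_of w)).
Proof.
move=> p_nonempty; have := p_of_mem w; rewrite inE (negbTE p_nonempty) /=.
by rewrite mem_filter => /andP[/and4P[_ _ ? /implyP ?] _].
Qed.

Lemma wlen_q_of w : p_of w != [::] -> wlen (q_of w) < wlen w.
Proof.
move=> p_nonempty; have [p_sharp sharp_p] := p_of_admissible p_nonempty.
have p_w := size_prefix (prefix_p_of w).
have p_pos : 0 < size (p_of w) by rewrite lt0n size_eq0.
rewrite /q_of /Defs.wlen prefix_prefix size_cat addKn size_drop.
case: ifP => [/sharp_p sharp_p'|_]; last by lia.
suff : size sharp < size (p_of w) by lia.
rewrite ltn_neqAle size_prefix // andbT; apply: contra p_sharp => /eqP size_eq.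
by move: sharp_p'; rewrite prefixE size_eq take_size eq_sym.
Qed.

Lemma gG_fuel_stable n m w :
  wlen w < n -> wlen w < m -> gG_fuel n w = gG_fuel m w.
Proof.
elim: n m w => [|n IHn] [|m] w //= lt_w_n lt_w_m.
case: ifP => // _; case: ifP => // /negbT p_nonempty.
have lt_q_w := wlen_q_of p_nonempty.
by rewrite (IHn m) //; lia.
Qed.

Lemma gG_rec w : gG w =
  if isNode w then (Some w, [::])
  else if p_of w == [::] then (None, [::])
  else ((gG (q_of w)).1, p_of w :: (gG (q_of w)).2).
Proof.
rewrite {1}/Defs.gG /= /gamma; case: (isNode w) => //.
case: ifP => // /negbT p_nonempty.
rewrite (@gG_fuel_stable _ (wlen (q_of w)).+1) ?wlen_q_of //.
by rewrite /Defs.gG; case: gG_fuel.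
Qed.

Lemma gG_node w : isNode w -> gG w = (Some w, [::]).
Proof. by move=> w_node; rewrite gG_rec w_node. Qed.

Lemma p_cands_rcons w c : ~~ isNode w -> p_cands (rcons w c) = p_cands w.
Proof.
move=> w_node.
have wc_V : rcons w c \in V = false.
  apply: negbTE; apply: contra w_node => /isNode_vocab.
  exact: isNode_prefix (prefix_rcons w c).
have sharp_wc : prefix sharp (rcons w c) = prefix sharp w.
  by rewrite prefix_rconsE eq_sym (negbTE (rcons_neq_sharp c w_node)) orbF.
rewrite /Defs.p_cands sharp_wc size_rcons -[(size w).+1]addn1 iotaD.
rewrite map_cat filter_cat /=.
rewrite take_oversize ?size_rcons // wc_V cats0; congr filter.
apply/eq_in_map => i; rewrite mem_iota add1n ltnS => /andP[_ le_i_w].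
by rewrite -cats1 takel_cat.
Qed.

Lemma p_of_rcons w c : ~~ isNode w -> p_of (rcons w c) = p_of w.
Proof.
move=> w_node; have w_sharp : w != sharp.
  by apply: contra w_node => /eqP->; apply/isNode_prefix_sharp/prefix_refl.
rewrite /Defs.p_of (negbTE w_sharp) (negbTE (rcons_neq_sharp c w_node)).
by rewrite p_cands_rcons.
Qed.

Lemma q_of_rcons w c : ~~ isNode w -> q_of (rcons w c) = rcons (q_of w) c.
Proof.
move=> w_node; rewrite /q_of p_of_rcons // drop_rcons ?rcons_cat //.
exact: size_prefix (prefix_p_of w).
Qed.

Lemma gG_rcons w c : gG (rcons w c) = (h (g w) c, G w ++ H (g w) c).
Proof.
move: {2}(wlen w).+1 (ltnSn (wlen w)) => n; elim: n w => [//|n IHn] w lt_w_n.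
have [w_node|w_node] := boolP (isNode w).
  by rewrite /g /G (gG_node w_node) /Defs.h /Defs.H /=; case: (gG _).
have wc_node : ~~ isNode (rcons w c).
  by apply: contra w_node; apply: isNode_prefix; apply: prefix_rcons.
rewrite /g /G (gG_rec (rcons w c)) (gG_rec w) (negbTE w_node) (negbTE wc_node).
rewrite p_of_rcons //; case: ifP => // /negbT p_nonempty.
have lt_q_w := wlen_q_of p_nonempty.
by rewrite q_of_rcons // IHn //; lia.
Qed.

End MinPop.

Theorem lemma3 (T : eqType) (V : seq (seq T)) (sharp : seq T) (sp : T) (aug : bool)
  (sp_notin_V : forall v, v \in V -> sp \notin v)
  (sp_notin_sharp : sp \notin sharp) :
  (g V sharp sp aug [::] = Some [::] /\ G V sharp sp aug [::] = [::]) /\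
  (g V sharp sp aug sharp = Some sharp /\ G V sharp sp aug sharp = [::]) /\
  (forall (w : seq T) (c : T), rcons w c <> sharp ->
     g V sharp sp aug (rcons w c) = h V sharp sp aug (g V sharp sp aug w) c /\
     G V sharp sp aug (rcons w c)
       = G V sharp sp aug w ++ H V sharp sp aug (g V sharp sp aug w) c).
Proof.
split; [|split].
- by rewrite /g /G gG_node // isNode_prefix_sharp // prefix0s.
- by rewrite /g /G gG_node // isNode_prefix_sharp // prefix_refl.
- by move=> w c _; rewrite /g /G gG_rcons.
Qed.
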